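(* Let $\mathbf{H}$ be a finite commutative semihypergroup with states $e_1,\dots,e_n$ that is derived from a group. Then for every $i$ and every $k$, the $k$-th row $(a_{i,1}(k),\dots,a_{i,n}(k))$ of $A_i$ is a rearrangement of the column $a_{1,1}$ (equivalently, of any column $a_{j,l}$); that is, every row of every $A_i$ has the same multiset of entries as the columns.
   Context: A finite commutative semihypergroup $\mathbf{H}$ with $n$ states $e_1,\dots,e_n$ is given by a convolution $e_i*e_j=\sum_{k=1}^n a_{i,j}(k)e_k$ ($i,j=1,\dots,n$), extended bilinearly, where $a_{i,j}(k)\ge 0$, $\sum_{k=1}^n a_{i,j}(k)=1$ for all $i,j$, the convolution is associative and commutative ($a_{i,j}(k)=a_{j,i}(k)$). Let $a_{i,j}\in\mathbb{R}^n$ denote the column vector $(a_{i,j}(1),\dots,a_{i,j}(n))^T$; let $A_i$ be the $n\times n$ matrix with columns $a_{i,1},\dots,a_{i,n}$ (so its $(k,j)$ entry is $a_{i,j}(k)$) and $B_i$ the matrix with columns $a_{1,i},\dots,a_{n,i}$. $\mathbf{H}$ is called derived from a group if it satisfies condition (A): the set $\{a_{i,j}: 1\le i,j\le n\}$ contains exactly $n$ distinct vectors, and for each $i$ the columns of $A_i$ are linearly independent and the columns of $B_i$ are linearly independent. *)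

From HB Require Import structures.
From mathcomp Require Import all_boot all_order all_algebra all_fingroup.
Set Implicit Arguments. Unset Strict Implicit. Unset Printing Implicit Defensive.
Import Order.TTheory GRing.Theory Num.Theory.
Local Open Scope ring_scope.

(* Structure constants: a i j is the column vector a_{i,j} = (a_{i,j}(k))_k,
   i.e. e_i * e_j = \sum_k (a i j) k 0 e_k.  States are indexed by 'I_n. *)
Definition coef (R : pzRingType) n (a : 'I_n -> 'I_n -> 'cV[R]_n) i j k : R :=
  a i j k ord0.

Definition is_fcshg (R : realFieldType) n (a : 'I_n -> 'I_n -> 'cV[R]_n) :=
  [/\ (forall i j k, 0 <= coef a i j k),
      (forall i j, \sum_k coef a i j k = 1),
      (forall i j, a i j = a j i) &
      (* associativity: (e_i * e_j) * e_l = e_i * (e_j * e_l) *)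
      (forall i j l m,
         \sum_k coef a i j k * coef a k l m
         = \sum_k coef a j l k * coef a i k m)].

Definition Amx (R : pzRingType) n (a : 'I_n -> 'I_n -> 'cV[R]_n) i : 'M[R]_n :=
  \matrix_(k, j) coef a i j k.
Definition Bmx (R : pzRingType) n (a : 'I_n -> 'I_n -> 'cV[R]_n) i : 'M[R]_n :=
  \matrix_(k, j) coef a j i k.

Definition cols_indep (R : fieldType) n (M : 'M[R]_n) := row_free M^T.

Definition derived_from_group (R : realFieldType) n
    (a : 'I_n -> 'I_n -> 'cV[R]_n) :=
  [/\ size (undup [seq a ij.1 ij.2 | ij <- enum {: 'I_n * 'I_n}]) = n,
      (forall i, cols_indep (Amx a i)) &
      (forall i, cols_indep (Bmx a i))].

From HB Require Import structures.
From mathcomp Require Import all_boot all_order all_algebra all_fingroup.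
Set Implicit Arguments. Unset Strict Implicit. Unset Printing Implicit Defensive.
Import Order.TTheory GRing.Theory Num.Theory.
Local Open Scope ring_scope.

(* Condition (A) makes each map j |-> a_{i,j} a bijection onto the n distinct
   structure vectors, so a_{i,j} = a_{p,q} can always be solved for j, giving
   a "left quotient" j = ldiv i p q (in the underlying group, i^-1 p q).
   Associativity, read through the independent columns of A_l, then gives
   a_{i,j}(k) = a_{j,l}(ldiv i k l); since k |-> ldiv i k l is injective, the
   columns a_{i,j} and a_{j,l} are rearrangements of each other.  The same
   transfer rule identifies the k-th row of A_i with a rearrangement of the
   column a_{i,i}. *)

Lemma perm_map_enum_inj (T : finType) (U : eqType) (f : T -> T) (g : T -> U) :
  injective f -> perm_eq [seq g (f x) | x <- enum T] [seq g x | x <- enum T].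
Proof.
move=> f_inj; rewrite (map_comp g f); apply: perm_map.
apply: uniq_perm; first by rewrite map_inj_uniq ?enum_uniq.
  exact: enum_uniq.
move=> x; rewrite mem_enum; apply/mapP.
by exists (invF f_inj x); rewrite ?mem_enum ?f_invF.
Qed.

Lemma cols_indep_lin0 (F : fieldType) n (M : 'M[F]_n) (c : 'I_n -> F) :
  cols_indep M -> (forall m, \sum_k c k * M m k = 0) -> forall k, c k = 0.
Proof.
move=> M_free c0 k.
have : \row_k c k *m M^T = 0 *m M^T.
  apply/rowP => m; rewrite mul0mx !mxE -[RHS](c0 m).
  by under eq_bigr do rewrite !mxE.
by move/(row_free_inj M_free)/rowP/(_ k); rewrite !mxE.
Qed.

Lemma cols_indep_col_inj (F : fieldType) n (M : 'M[F]_n) :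
  cols_indep M -> injective (fun j => col j M).
Proof.
move=> M_free j j' /(congr1 trmx); rewrite !tr_col !rowE.
move/(row_free_inj M_free)/matrixP/(_ 0 j); rewrite !mxE eqxx.
by case: (j =P j') => // _ /eqP; rewrite eqxx mulr1n mulr0n oner_eq0.
Qed.

Section DerivedFromGroup.

Variables (R : realFieldType) (n : nat) (a : 'I_n -> 'I_n -> 'cV[R]_n).

Hypothesis a_comm : forall i j, a i j = a j i.
Hypothesis a_assoc : forall i j l m,
  \sum_k coef a i j k * coef a k l m = \sum_k coef a j l k * coef a i k m.
Hypothesis size_values :
  size (undup [seq a ij.1 ij.2 | ij <- enum {: 'I_n * 'I_n}]) = n.
Hypothesis A_free : forall i, cols_indep (Amx a i).

Definition entries (v : 'cV[R]_n) := [seq v m ord0 | m <- enum 'I_n].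

Lemma a_inj i : injective (a i).
Proof.
move=> j j' eq_a; apply: (cols_indep_col_inj (A_free i)).
by apply/colP => k; rewrite !mxE /coef eq_a.
Qed.

Lemma a_onto i p q : exists j, a i j == a p q.
Proof.
set values := undup [seq a ij.1 ij.2 | ij <- enum {: 'I_n * 'I_n}].
have row_uniq : uniq [seq a i j | j <- enum 'I_n].
  by rewrite map_inj_uniq ?enum_uniq //; apply: a_inj.
have row_sub : {subset [seq a i j | j <- enum 'I_n] <= values}.
  move=> _ /mapP[j _ ->]; rewrite mem_undup.
  by apply/mapP; exists (i, j); rewrite ?mem_enum.
have [|_ row_values] := uniq_min_size row_uniq row_sub.
  by rewrite size_map size_enum_ord size_values.
have : a p q \in values.
  by rewrite mem_undup; apply/mapP; exists (p, q); rewrite ?mem_enum.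
by rewrite -row_values => /mapP[j _ ->]; exists j.
Qed.

Definition ldiv i p q : 'I_n := xchoose (a_onto i p q).

Lemma a_ldiv i p q : a i (ldiv i p q) = a p q.
Proof. exact/eqP/(xchooseP (a_onto i p q)). Qed.

Lemma ldiv_injl i q : injective (ldiv i ^~ q).
Proof.
move=> p p' eq_ldiv; apply: (@a_inj q).
by rewrite a_comm (a_comm q p') -(a_ldiv i) -(a_ldiv i p') eq_ldiv.
Qed.

Lemma ldiv_inj_divisor p q : injective (fun i => ldiv i p q).
Proof.
move=> i i' eq_ldiv; apply: (@a_inj (ldiv i p q)).
by rewrite (a_comm _ i) a_ldiv eq_ldiv (a_comm _ i') a_ldiv.
Qed.

Lemma coef_ldiv i j l k : coef a i j k = coef a j l (ldiv i k l).
Proof.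
apply/eqP; rewrite -subr_eq0; apply/eqP; move: k.
apply: (cols_indep_lin0 (A_free l)) => m.
rewrite /Amx; under eq_bigr => k _ do rewrite mxE mulrBl.
rewrite sumrB (eq_bigr (fun k => coef a i j k * coef a k l m)); last first.
  by move=> k _; rewrite /coef (a_comm l k).
rewrite a_assoc (reindex_inj (@ldiv_injl i l)) /=.
apply/eqP; rewrite subr_eq0; apply/eqP/eq_bigr => k _.
by rewrite /coef a_ldiv (a_comm l k).
Qed.

Lemma coef_transfer i j l k k' :
  a i k' = a k l -> coef a i j k = coef a j l k'.
Proof.
move=> eq_a; rewrite (coef_ldiv i j l) (_ : ldiv i k l = k') //.
by apply: (@a_inj i); rewrite a_ldiv eq_a.
Qed.

Lemma perm_entries_shift i j l : perm_eq (entries (a i j)) (entries (a j l)).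
Proof.
have -> : entries (a i j) = [seq coef a j l (ldiv i k l) | k <- enum 'I_n].
  by apply: eq_map => k; apply: coef_ldiv.
exact: perm_map_enum_inj (@ldiv_injl i l).
Qed.

Lemma perm_entries i j p q : perm_eq (entries (a i j)) (entries (a p q)).
Proof.
apply: perm_trans (perm_entries_shift i j q) _.
by rewrite (a_comm p q); apply: perm_entries_shift.
Qed.

Lemma perm_Amx_row i k :
  perm_eq [seq Amx a i k m | m <- enum 'I_n] (entries (a i i)).
Proof.
have -> : [seq Amx a i k m | m <- enum 'I_n]
          = [seq coef a i i (ldiv m i k) | m <- enum 'I_n].
  apply: eq_map => m; rewrite mxE; symmetry; apply: coef_transfer.
  by rewrite (a_comm _ m) a_ldiv.
exact: perm_map_enum_inj (@ldiv_inj_divisor i k).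
Qed.

End DerivedFromGroup.

Theorem corollary3 (R : realFieldType) (n : nat)
    (a : 'I_n -> 'I_n -> 'cV[R]_n) :
  is_fcshg a -> derived_from_group a ->
  forall (i k j l : 'I_n),
    perm_eq [seq Amx a i k m | m <- enum 'I_n]
            [seq coef a j l m | m <- enum 'I_n].
Proof.
move=> [_ _ a_comm a_assoc] [size_values A_free _] i k j l.
apply: perm_trans (perm_Amx_row a_comm a_assoc size_values A_free i k) _.
exact: (perm_entries a_comm a_assoc size_values A_free i i j l).
Qed.
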